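(* (General model.) For every $p\ge 2$ there exists an in-tree task graph $T$ such that every schedule $S$ of $T$ on $p$ processors satisfies $$\frac{C_{\max}(S)}{C^*_p(T)}\cdot\frac{M(S)}{M^*_p(T)}\ \ge\ p;$$ hence no algorithm is both an $\alpha(p)$-approximation for makespan and a $\beta(p)$-approximation for peak memory with $\alpha(p)\beta(p)<p$. Moreover this bound is tight: for every in-tree $T$ and every $p$, a single-processor schedule (without idle time) of minimum peak memory has peak memory $M^*_p(T)$ and makespan at most $p\,C^*_p(T)$.
   Context: Model (general). An in-tree task graph $T$ has nodes $\{1,\dots,n\}$ and a root; every non-root node $i$ has a parent, and $\mathrm{Children}(i)$ is the set of children of $i$. Each node $i$ has an arbitrary processing time $w_i\ge 0$, execution-file size $n_i\ge 0$ and output-file size $f_i\ge 0$. A schedule on $p$ identical processors assigns each node $i$ a processor and a start time $\sigma_i\ge 0$; node $i$ runs without preemption during $[\sigma_i,\sigma_i+w_i)$, a processor runs at most one node at a time, and a node may start only after all its children have completed. The makespan is $C_{\max}=\max_i(\sigma_i+w_i)$. Memory: the output file of $i$ (size $f_i$) occupies memory from the start of $i$ until the completion of the parent of $i$ (for the root, until the end of the schedule), and the execution file of $i$ (size $n_i$) occupies memory while $i$ runs. The memory used at time $t$ is the total size of files present at time $t$; the peak memory $M(S)$ is the supremum over $t$ of the memory used. $C^*_p(T)$ denotes the minimum makespan and $M^*_p(T)$ the minimum peak memory over all schedules of $T$ on $p$ processors. *)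

From Stdlib Require Import Reals Lra List.
Import ListNotations.
Open Scope R_scope.

Record tree := mkTree {
  nn   : nat;
  root : nat;
  par  : nat -> option nat;
  w    : nat -> R;            (* processing times *)
  ex   : nat -> R;            (* execution-file sizes (n_i in the paper) *)
  out  : nat -> R             (* output-file sizes (f_i in the paper) *)
}.

Fixpoint iter_par (T : tree) (k : nat) (i : nat) : option nat :=
  match k with
  | O => Some i
  | S k' => match par T i with
            | None => None
            | Some j => iter_par T k' j
            end
  end.

Definition wf_tree (T : tree) : Prop :=
  (root T < nn T)%nat /\
  par T (root T) = None /\
  (forall i, (i < nn T)%nat -> i <> root T ->
     exists j, par T i = Some j /\ (j < nn T)%nat) /\
  (forall i, (i < nn T)%nat -> exists k, iter_par T k i = Some (root T)) /\
  (forall i, (i < nn T)%nat -> 0 <= w T i /\ 0 <= ex T i /\ 0 <= out T i).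

Definition child (T : tree) (j i : nat) : Prop :=
  (j < nn T)%nat /\ par T j = Some i.

Record schedule := mkSched {
  proc  : nat -> nat;
  sigma : nat -> R
}.

Definition running (T : tree) (S : schedule) (i : nat) (t : R) : Prop :=
  sigma S i <= t < sigma S i + w T i.

Definition valid (T : tree) (p : nat) (S : schedule) : Prop :=
  (forall i, (i < nn T)%nat -> (proc S i < p)%nat /\ 0 <= sigma S i) /\
  (forall i j t, (i < nn T)%nat -> (j < nn T)%nat -> i <> j ->
     proc S i = proc S j -> ~ (running T S i t /\ running T S j t)) /\
  (forall i j, (i < nn T)%nat -> child T j i ->
     sigma S j + w T j <= sigma S i).

Definition sumR (l : list R) : R := fold_right Rplus 0 l.
Definition nodes (T : tree) : list nat := seq 0 (nn T).

Definition makespan (T : tree) (S : schedule) : R :=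
  fold_right Rmax 0 (map (fun i => sigma S i + w T i) (nodes T)).

Definition ind (a b t : R) : R :=
  if Rle_dec a t then (if Rlt_dec t b then 1 else 0) else 0.

(* time until which the output file of i stays in memory *)
Definition out_end (T : tree) (S : schedule) (i : nat) : R :=
  match par T i with
  | Some j => sigma S j + w T j
  | None => makespan T S
  end.

Definition mem (T : tree) (S : schedule) (t : R) : R :=
  sumR (map (fun i => out T i * ind (sigma S i) (out_end T S i) t
                    + ex T i * ind (sigma S i) (sigma S i + w T i) t)
            (nodes T)).

Definition is_peak (T : tree) (S : schedule) (m : R) : Prop :=
  is_lub (fun x => exists t, x = mem T S t) m.

Definition is_min_makespan (T : tree) (p : nat) (c : R) : Prop :=
  (exists S, valid T p S /\ makespan T S = c) /\
  (forall S, valid T p S -> c <= makespan T S).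

Definition is_min_peak (T : tree) (p : nat) (m : R) : Prop :=
  (exists S mS, valid T p S /\ is_peak T S mS /\ mS = m) /\
  (forall S mS, valid T p S -> is_peak T S mS -> m <= mS).

Definition single_proc (T : tree) (S : schedule) : Prop :=
  exists q, forall i, (i < nn T)%nat -> proc S i = q.

Definition no_idle (T : tree) (S : schedule) : Prop :=
  forall t, 0 <= t < makespan T S ->
    exists i, (i < nn T)%nat /\ running T S i t.

(* For the lower bound take [p] independent unit tasks with unit execution
   files below a root of duration 0: the optimal makespan and the optimal peak
   memory are both 1, and [p] unit intervals inside [[0, C]], at most [M] of
   them overlapping at any time, force [p <= M C].

   For the upper bound, sequentialize an arbitrary schedule by running its
   tasks back to back in the order of their start times.  While a task [i] runs
   in the sequential schedule, every file it holds was already present in the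
   original schedule at the start of [i], so its memory never exceeds the
   original peak; hence a memory-optimal sequential schedule is optimal among
   all schedules.  A schedule without idle time lasts at most the
   total work, which is at most [p] times the optimal makespan. *)

From Stdlib Require Import Reals Lra Lia List Classical Wf_nat.
(* Imported last so that [Defs.ind] shadows [Rtopology.ind]. *)
From Pilot Require Import Defs.
Import ListNotations.
Open Scope R_scope.

Lemma sumR_cons x l : sumR (x :: l) = x + sumR l.
Proof. reflexivity. Qed.

Lemma sumR_app l1 l2 : sumR (l1 ++ l2) = sumR l1 + sumR l2.
Proof.
  induction l1; cbn [app]; [unfold sumR; simpl; lra|].
  rewrite !sumR_cons, IHl1. lra.
Qed.

Lemma sumR_map_le {A} (f g : A -> R) l :
  (forall x, In x l -> f x <= g x) -> sumR (map f l) <= sumR (map g l).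
Proof.
  induction l; cbn [map In]; intros H; [unfold sumR; simpl; lra|].
  rewrite !sumR_cons. specialize (IHl (fun x Hx => H x (or_intror Hx))).
  specialize (H a (or_introl eq_refl)). lra.
Qed.

Lemma sumR_map_plus {A} (f g : A -> R) l :
  sumR (map (fun x => f x + g x) l) = sumR (map f l) + sumR (map g l).
Proof.
  induction l; cbn [map]; [unfold sumR; simpl; lra|].
  rewrite !sumR_cons, IHl. lra.
Qed.

Lemma sumR_map_const {A} (f : A -> R) c l :
  (forall x, In x l -> f x = c) -> sumR (map f l) = INR (length l) * c.
Proof.
  induction l; cbn [map In length]; intros H; [unfold sumR; simpl; lra|].
  rewrite sumR_cons, H, IHl, S_INR by auto. lra.
Qed.

Lemma sumR_map_eq0 {A} (f : A -> R) l :
  (forall x, In x l -> f x = 0) -> sumR (map f l) = 0.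
Proof. intros H. rewrite (sumR_map_const f 0); auto. lra. Qed.

Lemma sumR_map_nonneg {A} (f : A -> R) l :
  (forall x, In x l -> 0 <= f x) -> 0 <= sumR (map f l).
Proof.
  intros H. rewrite <- (sumR_map_eq0 (fun _ => 0) l) by auto.
  apply sumR_map_le. auto.
Qed.

Lemma elem_le_sumR_map {A} (f : A -> R) l a :
  (forall x, In x l -> 0 <= f x) -> In a l -> f a <= sumR (map f l).
Proof.
  induction l; cbn [map In]; intros H Ha; [contradiction|]. rewrite sumR_cons.
  destruct Ha as [->|Ha].
  - assert (0 <= sumR (map f l)) by (apply sumR_map_nonneg; auto). lra.
  - assert (0 <= f a0) by auto. specialize (IHl (fun x Hx => H x (or_intror Hx)) Ha). lra.
Qed.

Lemma sumR_map_indicator (a : nat) (c : R) l : In a l -> NoDup l ->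
  sumR (map (fun k => if Nat.eq_dec k a then c else 0) l) = c.
Proof.
  induction l; cbn [map In]; intros Ha Hn; [contradiction|]. inversion Hn; subst.
  rewrite sumR_cons. destruct (Nat.eq_dec a0 a).
  - subst. rewrite sumR_map_eq0; [lra|].
    intros x Hx. destruct (Nat.eq_dec x a); [subst; contradiction|auto].
  - destruct Ha as [->|Ha]; [congruence|]. rewrite IHl; auto. lra.
Qed.

Lemma sumR_map_filter {A} (f : A -> R) (g : A -> bool) l :
  sumR (map f l) =
  sumR (map f (filter g l)) + sumR (map f (filter (fun x => negb (g x)) l)).
Proof.
  induction l; cbn [map]; [unfold sumR; simpl; lra|]. cbn [filter].
  destruct (g a); cbn [map negb]; rewrite !sumR_cons, IHl; lra.
Qed.

Lemma sumR_map_remove_le (f : nat -> R) l e :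
  (forall x, In x l -> 0 <= f x) -> In e l ->
  f e + sumR (map f (remove Nat.eq_dec e l)) <= sumR (map f l).
Proof.
  induction l; cbn [map In]; intros H He; [contradiction|]. rewrite sumR_cons.
  cbn [remove]. destruct (Nat.eq_dec e a).
  - subst. destruct (in_dec Nat.eq_dec a l).
    + specialize (IHl (fun x Hx => H x (or_intror Hx)) i). assert (0 <= f a) by auto. lra.
    + rewrite notin_remove by auto. lra.
  - destruct He as [->|He]; [congruence|]. cbn [map]. rewrite sumR_cons.
    specialize (IHl (fun x Hx => H x (or_intror Hx)) He). lra.
Qed.

Lemma sumR_map_remove (f : nat -> R) l e : NoDup l -> In e l ->
  sumR (map f l) = f e + sumR (map f (remove Nat.eq_dec e l)).
Proof.
  induction l; cbn [map In]; intros Hn He; [contradiction|]. inversion Hn; subst.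
  rewrite sumR_cons. cbn [remove]. destruct (Nat.eq_dec e a).
  - subst. rewrite notin_remove by auto. lra.
  - destruct He as [->|He]; [congruence|]. cbn [map]. rewrite sumR_cons, IHl; auto. lra.
Qed.

Lemma sumR_map_swap {A B} (g : A -> B -> R) (l1 : list A) (l2 : list B) :
  sumR (map (fun x => sumR (map (fun y => g x y) l2)) l1) =
  sumR (map (fun y => sumR (map (fun x => g x y) l1)) l2).
Proof.
  induction l1; cbn [map].
  - rewrite sumR_map_eq0; auto.
  - rewrite sumR_cons, IHl1, <- sumR_map_plus. reflexivity.
Qed.

Lemma NoDup_remove_nat (x : nat) l : NoDup l -> NoDup (remove Nat.eq_dec x l).
Proof.
  induction l; simpl; intros H; auto. inversion H; subst.
  destruct (Nat.eq_dec x a); auto. constructor; auto.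
  intros Hin. apply in_remove in Hin. tauto.
Qed.

Lemma fold_Rmax_ge0 l : 0 <= fold_right Rmax 0 l.
Proof. induction l; simpl; [lra|]. apply Rle_trans with (2 := Rmax_r _ _). auto. Qed.

Lemma fold_Rmax_ge l x : In x l -> x <= fold_right Rmax 0 l.
Proof.
  induction l; simpl; intros H; [contradiction|]. destruct H as [->|H].
  - apply Rmax_l.
  - apply Rle_trans with (2 := Rmax_r _ _). auto.
Qed.

Lemma fold_Rmax_lub l B :
  0 <= B -> (forall x, In x l -> x <= B) -> fold_right Rmax 0 l <= B.
Proof. induction l; simpl; intros H0 H; [lra|]. apply Rmax_lub; auto. Qed.

Lemma fold_Rmax_attained l : fold_right Rmax 0 l = 0 \/ In (fold_right Rmax 0 l) l.
Proof.
  induction l; simpl; [auto|]. destruct (Rle_dec a (fold_right Rmax 0 l)).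
  - rewrite Rmax_right by auto. destruct IHl as [->|H]; [left; reflexivity|tauto].
  - rewrite Rmax_left by lra. tauto.
Qed.

Lemma fold_Rmax_map_le {A} (f g : A -> R) l : (forall x, In x l -> f x <= g x) ->
  fold_right Rmax 0 (map f l) <= fold_right Rmax 0 (map g l).
Proof.
  intros H. apply fold_Rmax_lub; [apply fold_Rmax_ge0|]. intros x Hx.
  apply in_map_iff in Hx. destruct Hx as [y [<- Hy]].
  apply Rle_trans with (g y); auto. apply fold_Rmax_ge, in_map; auto.
Qed.

Lemma list_argmax {A} (l : list A) (P : A -> Prop) (f : A -> R) :
  (exists x, In x l /\ P x) ->
  exists x, In x l /\ P x /\ forall y, In y l -> P y -> f y <= f x.
Proof.
  induction l as [|a l IH]; simpl; intros [x [Hx Px]]; [contradiction|].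
  destruct (classic (exists x, In x l /\ P x)) as [E|NE].
  - destruct (IH E) as [m [Hm [Pm Hmax]]].
    destruct (classic (P a /\ f m <= f a)) as [[Pa Ha]|Ha].
    + exists a. repeat split; auto. intros y [<-|Hy] Py; [lra|].
      specialize (Hmax y Hy Py). lra.
    + exists m. repeat split; auto. intros y [<-|Hy] Py; [|auto].
      destruct (Rle_dec (f a) (f m)); auto. exfalso. apply Ha. split; [auto|lra].
  - destruct Hx as [<-|Hx]; [|exfalso; apply NE; eauto].
    exists a. repeat split; auto. intros y [<-|Hy] Py; [lra|]. exfalso; apply NE; eauto.
Qed.

Lemma list_argmin {A} (l : list A) (P : A -> Prop) (f : A -> R) :
  (exists x, In x l /\ P x) ->
  exists x, In x l /\ P x /\ forall y, In y l -> P y -> f x <= f y.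
Proof.
  intros H. destruct (list_argmax l P (fun x => - f x) H) as [x [H1 [H2 H3]]].
  exists x. repeat split; auto. intros y Hy Py. specialize (H3 y Hy Py). lra.
Qed.

Lemma ind_ge0 a b t : 0 <= ind a b t.
Proof. unfold ind; destruct (Rle_dec a t); destruct (Rlt_dec t b); lra. Qed.

Lemma ind_le1 a b t : ind a b t <= 1.
Proof. unfold ind; destruct (Rle_dec a t); destruct (Rlt_dec t b); lra. Qed.

Lemma ind_inside a b t : a <= t < b -> ind a b t = 1.
Proof. intros [H1 H2]; unfold ind; destruct (Rle_dec a t); destruct (Rlt_dec t b); lra. Qed.

Lemma ind_outside a b t : ~ (a <= t < b) -> ind a b t = 0.
Proof.
  intros H; unfold ind; destruct (Rle_dec a t); destruct (Rlt_dec t b); auto.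
  exfalso; apply H; lra.
Qed.

Definition active_units (L : list nat) (s : nat -> R) (t : R) : R :=
  sumR (map (fun j => ind (s j) (s j + 1) t) L).

Lemma count_le_load_of_clustered (L : list nat) (s : nat -> R) (K : R) :
  (forall t, active_units L s t <= K) ->
  (forall i j, In i L -> In j L -> s i < s j + 1) ->
  0 <= K -> INR (length L) <= K.
Proof.
  intros HK Hcl HK0. destruct L as [|x0 L0]; [simpl; lra|].
  destruct (list_argmax (x0 :: L0) (fun _ => True) s) as [x1 [Hx1 [_ Hmax]]];
    [exists x0; simpl; auto|].
  rewrite <- (Rmult_1_r (INR _)), <- (sumR_map_const (fun j => ind (s j) (s j + 1) (s x1))).
  - apply HK.
  - intros j Hj. apply ind_inside. split; [apply Hmax|apply Hcl]; auto.
Qed.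

(* The intervals starting before [s m + 1], with [m] the earliest, pairwise
   overlap; the others lie in [[s m + 1, C]]. *)
Lemma count_le_load_mul_length (L : list nat) (s : nat -> R) (a C K : R) :
  (forall t, active_units L s t <= K) ->
  (forall j, In j L -> a <= s j /\ s j + 1 <= C) ->
  a <= C -> 0 <= K -> INR (length L) <= K * (C - a).
Proof.
  remember (length L) as n eqn:En. revert L a En.
  induction n as [n IH] using Wf_nat.lt_wf_ind; intros L a En HK Hs HaC HK0.
  destruct L as [|x0 L0]; [subst; simpl; nra|].
  set (L := x0 :: L0) in *.
  destruct (list_argmin L (fun _ => True) s) as [m [Hm [_ Hmin]]];
    [exists x0; simpl; auto|].
  set (g := fun j => if Rlt_dec (s j) (s m + 1) then true else false).
  assert (Hlen := filter_length g L).
  set (A := filter g L) in *. set (B := filter (fun x => negb (g x)) L) in *.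
  assert (HlB : (length B < n)%nat).
  { assert (In m A) by (apply filter_In; split; auto; unfold g; destruct Rlt_dec; auto; lra).
    assert (0 < length A)%nat by (destruct A; [contradiction|simpl; lia]). lia. }
  assert (Hload : forall t, active_units A s t + active_units B s t <= K).
  { intros t. unfold active_units, A, B. rewrite <- sumR_map_filter. apply HK. }
  assert (Hunits_ge0 : forall L' t, 0 <= active_units L' s t)
    by (intros; apply sumR_map_nonneg; intros; apply ind_ge0).
  assert (HB : INR (length B) <= K * (C - (s m + 1))).
  { apply (IH (length B) HlB B (s m + 1) eq_refl); auto.
    - intros t. specialize (Hload t). specialize (Hunits_ge0 A t). lra.
    - intros j Hj. apply filter_In in Hj. destruct Hj as [Hj Hg].
      unfold g in Hg. destruct Rlt_dec; [discriminate|]. split; [lra|]. apply Hs; auto.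
    - apply Hs; auto. }
  assert (HA : INR (length A) <= K).
  { apply (count_le_load_of_clustered _ s); auto.
    { intros t. specialize (Hload t). specialize (Hunits_ge0 B t). lra. }
    intros i j Hi Hj.
    apply filter_In in Hi. apply filter_In in Hj. destruct Hi as [_ Hg]. destruct Hj as [Hj _].
    unfold g in Hg. destruct Rlt_dec; [|discriminate]. specialize (Hmin j Hj I). lra. }
  rewrite En, <- Hlen, plus_INR.
  assert (a <= s m) by (apply Hs; auto).
  assert (K * (C - (s m + 1)) + K <= K * (C - a)) by nra. lra.
Qed.

Lemma covered_length_le_sum (L : list nat) (a : R) (s d : nat -> R) (C : R) :
  (forall t, a <= t < C -> exists i, In i L /\ s i <= t < s i + d i) ->
  (forall i, In i L -> 0 <= d i) -> C - a <= sumR (map d L).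
Proof.
  remember (length L) as n eqn:En. revert L a En.
  induction n as [n IH] using Wf_nat.lt_wf_ind; intros L a En Hc Hd.
  destruct (Rlt_dec a C) as [h|h].
  2:{ assert (0 <= sumR (map d L)) by (apply sumR_map_nonneg; auto). lra. }
  destruct (Hc a ltac:(lra)) as [e [He [H1 H2]]].
  assert (Hrem := sumR_map_remove_le d L e Hd He).
  assert (C - (s e + d e) <= sumR (map d (remove Nat.eq_dec e L))).
  { eapply IH; [|reflexivity|..].
    - assert (Hlt := remove_length_lt Nat.eq_dec L e He). lia.
    - intros t Ht. destruct (Hc t ltac:(lra)) as [i [Hi Hi2]]. exists i. split; auto.
      apply in_in_remove; auto. intros ->. lra.
    - intros i Hi. apply in_remove in Hi. apply Hd; tauto. }
  lra.
Qed.

Lemma disjoint_sum_le_length (L : list nat) (a : R) (s d : nat -> R) (C : R) :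
  NoDup L ->
  (forall i, In i L -> a <= s i /\ s i + d i <= C /\ 0 < d i) ->
  (forall i j, In i L -> In j L -> i <> j -> s i + d i <= s j \/ s j + d j <= s i) ->
  a <= C -> sumR (map d L) <= C - a.
Proof.
  remember (length L) as n eqn:En. revert L a En.
  induction n as [n IH] using Wf_nat.lt_wf_ind; intros L a En Hnd Hi Hdis HaC.
  destruct L as [|x0 L0]; [unfold sumR; simpl; lra|].
  destruct (list_argmin (x0 :: L0) (fun _ => True) s) as [e [He [_ Hmin]]];
    [exists x0; simpl; auto|].
  rewrite (sumR_map_remove d _ e Hnd He).
  destruct (Hi e He) as [Ha1 [Ha2 Ha3]].
  assert (sumR (map d (remove Nat.eq_dec e (x0 :: L0))) <= C - (s e + d e)).
  { eapply IH; [|reflexivity|..]; auto.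
    - assert (Hlt := remove_length_lt Nat.eq_dec _ e He). lia.
    - apply NoDup_remove_nat; auto.
    - intros i Hir. apply in_remove in Hir. destruct Hir as [Hir Hne].
      destruct (Hi i Hir) as [B1 [B2 B3]]. split; [|split; auto].
      destruct (Hdis i e Hir He Hne) as [D|D]; auto.
      specialize (Hmin i Hir I). lra.
    - intros i j Hi' Hj' Hne. apply in_remove in Hi'. apply in_remove in Hj'.
      apply Hdis; tauto. }
  lra.
Qed.

Lemma in_nodes T i : In i (nodes T) <-> (i < nn T)%nat.
Proof. unfold nodes. rewrite in_seq. lia. Qed.

Lemma w_nonneg T i : wf_tree T -> (i < nn T)%nat -> 0 <= w T i.
Proof. intros [_ [_ [_ [_ Hw]]]] Hi. apply Hw; auto. Qed.

Lemma parent_in_tree T k q : wf_tree T -> (k < nn T)%nat -> par T k = Some q -> (q < nn T)%nat.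
Proof.
  intros [_ [Hr [Hp _]]] Hk Hq.
  destruct (Nat.eq_dec k (root T)) as [->|hne]; [congruence|].
  destruct (Hp k Hk hne) as [j [Hj Hjn]]. congruence.
Qed.

Lemma end_le_makespan T S i : (i < nn T)%nat -> sigma S i + w T i <= makespan T S.
Proof.
  intros Hi. apply fold_Rmax_ge, (in_map (fun k => sigma S k + w T k)), in_nodes, Hi.
Qed.

Lemma makespan_ge0 T S : 0 <= makespan T S.
Proof. apply fold_Rmax_ge0. Qed.

Lemma out_end_le_makespan T S k : wf_tree T -> (k < nn T)%nat -> out_end T S k <= makespan T S.
Proof.
  intros Hwf Hk. unfold out_end. destruct (par T k) as [q|] eqn:Hq; [|lra].
  apply end_le_makespan. apply (parent_in_tree T k q); auto.
Qed.

Lemma mem_nonneg T S t : wf_tree T -> 0 <= mem T S t.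
Proof.
  intros Hwf. unfold mem. apply sumR_map_nonneg. intros i Hi. apply in_nodes in Hi.
  destruct Hwf as [_ [_ [_ [_ Hw]]]]. destruct (Hw i Hi) as [_ [H1 H2]].
  assert (0 <= ind (sigma S i) (out_end T S i) t) by apply ind_ge0.
  assert (0 <= ind (sigma S i) (sigma S i + w T i) t) by apply ind_ge0. nra.
Qed.

Lemma mem_eq0_outside T p S t : wf_tree T -> valid T p S ->
  t < 0 \/ makespan T S <= t -> mem T S t = 0.
Proof.
  intros Hwf [Hv _] Ht. unfold mem. apply sumR_map_eq0. intros k Hk. apply in_nodes in Hk.
  assert (0 <= sigma S k) by apply Hv, Hk.
  assert (out_end T S k <= makespan T S) by (apply out_end_le_makespan; auto).
  assert (sigma S k + w T k <= makespan T S) by (apply end_le_makespan; auto).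
  rewrite !ind_outside by lra. ring.
Qed.

Lemma valid_same_proc_disjoint T p S i j : valid T p S ->
  (i < nn T)%nat -> (j < nn T)%nat -> i <> j -> proc S i = proc S j ->
  0 < w T i -> 0 < w T j ->
  sigma S i + w T i <= sigma S j \/ sigma S j + w T j <= sigma S i.
Proof.
  intros [_ [Hv _]] Hi Hj Hne Hp Hwi Hwj.
  destruct (Rle_dec (sigma S i + w T i) (sigma S j)); auto.
  destruct (Rle_dec (sigma S j + w T j) (sigma S i)); auto.
  exfalso. apply (Hv i j (Rmax (sigma S i) (sigma S j)) Hi Hj Hne Hp).
  unfold running, Rmax. destruct Rle_dec; lra.
Qed.

Lemma proc_load_le_makespan T p S q : wf_tree T -> valid T p S ->
  sumR (map (fun i => if Nat.eq_dec q (proc S i) then w T i else 0) (nodes T))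
  <= makespan T S.
Proof.
  intros Hwf HS.
  set (g := fun i => if Nat.eq_dec q (proc S i) then
                       (if Rlt_dec 0 (w T i) then true else false) else false).
  rewrite (sumR_map_filter _ g), (sumR_map_eq0 _ (filter (fun x => negb (g x)) _)).
  2:{ intros i Hi. apply filter_In in Hi. destruct Hi as [Hi Hg]. apply in_nodes in Hi.
      unfold g in Hg. destruct Nat.eq_dec; auto. destruct Rlt_dec; [discriminate|].
      assert (0 <= w T i) by (apply w_nonneg; auto). lra. }
  rewrite Rplus_0_r.
  replace (sumR (map _ (filter g (nodes T)))) with (sumR (map (w T) (filter g (nodes T)))).
  2:{ f_equal. apply map_ext_in. intros i Hi. apply filter_In in Hi. destruct Hi as [_ Hg].
      unfold g in Hg. destruct Nat.eq_dec; [auto|discriminate]. }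
  replace (makespan T S) with (makespan T S - 0) by lra.
  apply (disjoint_sum_le_length _ _ (sigma S)).
  - apply NoDup_filter, seq_NoDup.
  - intros i Hi. apply filter_In in Hi. destruct Hi as [Hi Hg]. apply in_nodes in Hi.
    unfold g in Hg. destruct Nat.eq_dec; [|discriminate]. destruct Rlt_dec; [|discriminate].
    destruct HS as [Hv _]. split; [apply Hv; auto|]. split; auto. apply end_le_makespan; auto.
  - intros i j Hi Hj Hne. apply filter_In in Hi. apply filter_In in Hj.
    destruct Hi as [Hi Hgi]. destruct Hj as [Hj Hgj]. apply in_nodes in Hi. apply in_nodes in Hj.
    unfold g in Hgi, Hgj. do 2 destruct Nat.eq_dec; try discriminate.
    do 2 destruct Rlt_dec; try discriminate.
    apply (valid_same_proc_disjoint T p S); congruence.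
  - apply makespan_ge0.
Qed.

Lemma work_le_p_makespan T p S : wf_tree T -> valid T p S ->
  sumR (map (w T) (nodes T)) <= INR p * makespan T S.
Proof.
  intros Hwf HS.
  replace (sumR (map (w T) (nodes T))) with
    (sumR (map (fun i => sumR (map (fun q => if Nat.eq_dec q (proc S i) then w T i else 0)
                                   (seq 0 p))) (nodes T))).
  2:{ f_equal. apply map_ext_in. intros i Hi. apply in_nodes in Hi.
      apply sumR_map_indicator; [|apply seq_NoDup]. apply in_seq.
      destruct HS as [Hv _]. destruct (Hv i Hi). lia. }
  rewrite sumR_map_swap.
  replace (INR p * makespan T S) with (sumR (map (fun _ : nat => makespan T S) (seq 0 p)))
    by (rewrite (sumR_map_const _ (makespan T S)), length_seq; auto).
  apply sumR_map_le. intros q _. apply (proc_load_le_makespan T p); auto.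
Qed.

Lemma makespan_le_work_of_no_idle T S : wf_tree T -> no_idle T S ->
  makespan T S <= sumR (map (w T) (nodes T)).
Proof.
  intros Hwf Hni. replace (makespan T S) with (makespan T S - 0) by lra.
  apply (covered_length_le_sum _ _ (sigma S)).
  - intros t Ht. destruct (Hni t Ht) as [i [Hi Hr]]. exists i. split; [apply in_nodes|]; auto.
  - intros i Hi. apply w_nonneg, in_nodes; auto.
Qed.

Fixpoint lin_comb (d : nat -> R) (k : nat) (n : nat -> nat) : R :=
  match k with 0 => 0 | S k' => lin_comb d k' n + INR (n k') * d k' end.

Fixpoint lattice (d : nat -> R) (N : nat) (k : nat) : list R :=
  match k with
  | 0 => [0]
  | S k' => flat_map (fun v => map (fun m => v + INR m * d k') (seq 0 (S N))) (lattice d N k')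
  end.

Lemma lin_comb_ext d k n n' : (forall i, (i < k)%nat -> n i = n' i) ->
  lin_comb d k n = lin_comb d k n'.
Proof.
  induction k; simpl; intros H; auto.
  rewrite IHk by (intros; apply H; lia). rewrite H by lia. auto.
Qed.

Lemma lin_comb_zero d k : lin_comb d k (fun _ => 0%nat) = 0.
Proof. induction k; simpl; [auto|]. rewrite IHk. simpl. ring. Qed.

Lemma in_lattice d N k v :
  In v (lattice d N k) <->
  exists n, (forall i, (i < k)%nat -> (n i <= N)%nat) /\ v = lin_comb d k n.
Proof.
  revert v; induction k; intros v; cbn [lattice In lin_comb].
  - split.
    + intros [<-|[]]. exists (fun _ => 0%nat). split; auto; intros; lia.
    + intros [n [_ ->]]. auto.
  - rewrite in_flat_map. split.
    + intros [u [Hu Hv]]. apply in_map_iff in Hv. destruct Hv as [m [<- Hm]]. apply in_seq in Hm.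
      apply IHk in Hu. destruct Hu as [n [Hn ->]].
      exists (fun i => if Nat.eq_dec i k then m else n i). split.
      * intros i Hi. destruct (Nat.eq_dec i k); [lia|]. apply Hn; lia.
      * destruct (Nat.eq_dec k k); [|congruence].
        rewrite (lin_comb_ext d k (fun i => if Nat.eq_dec i k then m else n i) n);
          [reflexivity|].
        intros i Hi. destruct (Nat.eq_dec i k); [lia|auto].
    + intros [n [Hn ->]]. exists (lin_comb d k n). split.
      * apply IHk. exists n. split; auto.
      * apply in_map_iff. exists (n k). split; auto. apply in_seq.
        specialize (Hn k ltac:(lia)). lia.
Qed.

Lemma lin_comb_nonneg d k n : (forall i, (i < k)%nat -> 0 <= d i) -> 0 <= lin_comb d k n.
Proof.
  induction k; simpl; intros H; [lra|].
  specialize (IHk (fun i Hi => H i ltac:(lia))). assert (0 <= d k) by (apply H; lia).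
  assert (0 <= INR (n k)) by apply pos_INR. nra.
Qed.

Lemma term_le_lin_comb d k n j : (forall i, (i < k)%nat -> 0 <= d i) -> (j < k)%nat ->
  INR (n j) * d j <= lin_comb d k n.
Proof.
  induction k; simpl; intros H Hj; [lia|].
  assert (0 <= d k) by (apply H; lia). assert (0 <= INR (n k)) by apply pos_INR.
  destruct (Nat.eq_dec j k).
  - subst. assert (0 <= lin_comb d k n) by (apply lin_comb_nonneg; intros; apply H; lia). lra.
  - assert (INR (n j) * d j <= lin_comb d k n) by (apply IHk; [intros; apply H|]; lia). nra.
Qed.

Lemma lin_comb_incr d k n j : (j < k)%nat ->
  lin_comb d k (fun i => if Nat.eq_dec i j then S (n i) else n i) = lin_comb d k n + d j.
Proof.
  induction k; simpl; intros Hj; [lia|]. destruct (Nat.eq_dec k j).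
  - subst. rewrite (lin_comb_ext d j _ n).
    2:{ intros i Hi. destruct (Nat.eq_dec i j); [lia|auto]. }
    rewrite S_INR. ring.
  - rewrite IHk by lia. ring.
Qed.

(* Below the bound [B], the coefficient bound [N] is never reached. *)
Lemma lattice_add_closed d N k B v j : (forall i, (i < k)%nat -> 0 <= d i) ->
  (forall i, (i < k)%nat -> 0 < d i -> B < INR N * d i) ->
  In v (lattice d N k) -> (j < k)%nat -> v + d j <= B -> In (v + d j) (lattice d N k).
Proof.
  intros H0 HN Hv Hj HB. destruct (Rlt_dec 0 (d j)) as [hp|hz].
  2:{ replace (v + d j) with v by (assert (0 <= d j) by auto; lra). auto. }
  apply in_lattice in Hv. destruct Hv as [n [Hn ->]]. apply in_lattice.
  exists (fun i => if Nat.eq_dec i j then S (n i) else n i). split.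
  - intros i Hi. destruct (Nat.eq_dec i j); [|auto]. subst.
    destruct (Nat.eq_dec (n j) N) as [e|e]; [|specialize (Hn j Hi); lia].
    exfalso. assert (Hg := term_le_lin_comb d k n j H0 Hj). specialize (HN j Hj hp).
    rewrite e in Hg. lra.
  - rewrite lin_comb_incr; auto.
Qed.

Lemma exists_lattice_bound (d : nat -> R) B k :
  exists N, forall i, (i < k)%nat -> 0 < d i -> B < INR N * d i.
Proof.
  induction k.
  - exists 0%nat. intros; lia.
  - destruct IHk as [N HN]. destruct (INR_unbounded (B / d k)) as [N' HN'].
    exists (Nat.max N N'). intros i Hi Hd.
    assert (INR N <= INR (Nat.max N N')) by (apply le_INR; lia).
    assert (INR N' <= INR (Nat.max N N')) by (apply le_INR; lia).
    destruct (Nat.eq_dec i k).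
    + subst. apply Rmult_gt_compat_r with (r := d k) in HN'; auto.
      unfold Rdiv in HN'. rewrite Rmult_assoc, Rinv_l, Rmult_1_r in HN' by lra. nra.
    + specialize (HN i ltac:(lia) Hd). nra.
Qed.

(* The largest element of [L] below [x], or [0] if there is none. *)
Definition floor_in (L : list R) (x : R) : R :=
  fold_right (fun v acc => if Rle_dec v x then Rmax v acc else acc) 0 L.

Lemma floor_in_le L x : 0 <= x -> floor_in L x <= x.
Proof.
  induction L; simpl; intros H; auto. destruct (Rle_dec a x); auto. apply Rmax_lub; auto.
Qed.

Lemma floor_in_ge0 L x : 0 <= floor_in L x.
Proof.
  induction L; simpl; [lra|]. destruct (Rle_dec a x); auto.
  apply Rle_trans with (2 := Rmax_r _ _); auto.
Qed.

Lemma floor_in_max L x v : In v L -> v <= x -> v <= floor_in L x.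
Proof.
  induction L; simpl; intros Hv Hx; [contradiction|]. destruct Hv as [->|Hv].
  - destruct (Rle_dec v x); [apply Rmax_l|lra].
  - destruct (Rle_dec a x); auto. apply Rle_trans with (2 := Rmax_r _ _); auto.
Qed.

Lemma floor_in_mem L x : In 0 L -> In (floor_in L x) L.
Proof.
  intros H0. enough (floor_in L x = 0 \/ In (floor_in L x) L) as [->|] by auto.
  clear H0. induction L; simpl; auto. destruct (Rle_dec a x); [|destruct IHL; auto].
  unfold Rmax. destruct (Rle_dec a _); [destruct IHL; auto|auto].
Qed.

Definition snap (L : list R) (S : schedule) : schedule :=
  mkSched (proc S) (fun i => floor_in L (sigma S i)).

Section Snap.

Variables (T : tree) (N : nat) (B : R).
Hypothesis Hwf : wf_tree T.
Hypothesis HN : forall i, (i < nn T)%nat -> 0 < w T i -> B < INR N * w T i.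

Let L := lattice (w T) N (nn T).

Definition makespan_candidates : list R :=
  0 :: flat_map (fun v => map (fun i => v + w T i) (nodes T)) L.

Lemma snap_end_le_start p S i j : valid T p S -> makespan T S <= B ->
  (i < nn T)%nat -> (j < nn T)%nat -> sigma S j + w T j <= sigma S i ->
  sigma (snap L S) j + w T j <= sigma (snap L S) i.
Proof.
  intros [Hv _] HB Hi Hj H. simpl.
  assert (floor_in L (sigma S j) <= sigma S j) by (apply floor_in_le, Hv, Hj).
  apply floor_in_max; [|lra].
  apply lattice_add_closed with (B := B); auto.
  - intros; apply w_nonneg; auto.
  - apply floor_in_mem, in_lattice. exists (fun _ => 0%nat).
    split; [intros; lia|]. symmetry; apply lin_comb_zero.
  - assert (sigma S i + w T i <= makespan T S) by (apply end_le_makespan; auto).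
    assert (0 <= w T i) by (apply w_nonneg; auto). lra.
Qed.

Lemma snap_valid p S : valid T p S -> makespan T S <= B -> valid T p (snap L S).
Proof.
  intros HS HB. destruct HS as [Hv1 [Hv2 Hv3]] eqn:HSe. repeat split.
  - apply Hv1; auto.
  - apply floor_in_ge0.
  - intros i j t Hi Hj Hne Hp [Ri Rj]. unfold running in *.
    assert (0 < w T i) by lra. assert (0 < w T j) by lra.
    destruct (valid_same_proc_disjoint T p S i j HS Hi Hj Hne Hp) as [D|D]; auto.
    + assert (Hs := snap_end_le_start p S j i HS HB Hj Hi D). lra.
    + assert (Hs := snap_end_le_start p S i j HS HB Hi Hj D). lra.
  - intros i j Hi [Hj Hpar]. apply (snap_end_le_start p S); auto.
    apply Hv3; [exact Hi|split; auto].
Qed.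

Lemma snap_makespan_le p S : valid T p S -> makespan T (snap L S) <= makespan T S.
Proof.
  intros [Hv _]. apply fold_Rmax_map_le. intros i Hi. apply in_nodes in Hi. simpl.
  assert (floor_in L (sigma S i) <= sigma S i) by (apply floor_in_le, Hv, Hi). lra.
Qed.

Lemma snap_makespan_candidate S : In (makespan T (snap L S)) makespan_candidates.
Proof.
  unfold makespan, makespan_candidates.
  destruct (fold_Rmax_attained (map (fun i => sigma (snap L S) i + w T i) (nodes T)))
    as [->|E]; [left; auto|right].
  apply in_map_iff in E. destruct E as [i [<- Hi]]. apply in_flat_map.
  exists (floor_in L (sigma S i)). split.
  - apply floor_in_mem, in_lattice. exists (fun _ => 0%nat).
    split; [intros; lia|]. symmetry; apply lin_comb_zero.
  - apply in_map_iff. exists i. auto.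
Qed.

End Snap.

(* Snapping start times down to a lattice of bounded integer combinations of
   the processing times keeps schedules of makespan at most [B] valid without
   increasing their makespan, so the optimum is a minimum over finitely many
   candidate values. *)
Lemma exists_min_makespan T p S0 : wf_tree T -> valid T p S0 ->
  exists c, is_min_makespan T p c.
Proof.
  intros Hwf HS0. set (B := makespan T S0).
  destruct (exists_lattice_bound (w T) B (nn T)) as [N HN].
  set (L := lattice (w T) N (nn T)).
  assert (Hsnap : forall S, valid T p S -> makespan T S <= B ->
            valid T p (snap L S) /\ makespan T (snap L S) <= makespan T S /\
            In (makespan T (snap L S)) (makespan_candidates T N)).
  { intros S HS HB. split; [|split].
    - apply snap_valid with (B := B); auto.
    - apply (snap_makespan_le _ _ p); auto.
    - apply snap_makespan_candidate. }
  destruct (list_argmin (makespan_candidates T N)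
              (fun x => exists S, valid T p S /\ makespan T S = x) (fun x => x))
    as [c [Hc [Pc Hmin]]].
  { destruct (Hsnap S0 HS0 (Rle_refl _)) as [V1 [_ V3]]. eauto. }
  exists c. split; auto. intros S HS.
  destruct (Rle_dec (makespan T S) B) as [hB|hB].
  - destruct (Hsnap S HS hB) as [V1 [V2 V3]]. specialize (Hmin _ V3 (ex_intro _ _ (conj V1 eq_refl))). lra.
  - destruct (Hsnap S0 HS0 (Rle_refl _)) as [V1 [V2 V3]].
    specialize (Hmin _ V3 (ex_intro _ _ (conj V1 eq_refl))). fold B in V2. lra.
Qed.

Definition precedes (T : tree) (S : schedule) (j i : nat) : bool :=
  if Rlt_dec 0 (w T j) then
    (if Rlt_dec (sigma S j) (sigma S i) then true
     else if Req_dec_T (sigma S j) (sigma S i) then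
            (if Rlt_dec 0 (w T i) then Nat.ltb j i else false)
          else false)
  else false.

Definition seq_start (T : tree) (S : schedule) (i : nat) : R :=
  sumR (map (fun j => if precedes T S j i then w T j else 0) (nodes T)).

Definition sequentialize (T : tree) (S : schedule) : schedule :=
  mkSched (fun _ => 0%nat) (seq_start T S).

Section Sequentialize.

Variables (T : tree) (S : schedule).
Hypothesis Hwf : wf_tree T.

Lemma precedes_spec j i : precedes T S j i = true <->
  0 < w T j /\
  (sigma S j < sigma S i \/ (sigma S j = sigma S i /\ 0 < w T i /\ (j < i)%nat)).
Proof.
  unfold precedes. destruct (Rlt_dec 0 (w T j)); [|split; [discriminate|lra]].
  destruct (Rlt_dec (sigma S j) (sigma S i)); [split; auto|].
  destruct (Req_dec_T (sigma S j) (sigma S i));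
    [|split; [discriminate|intros [_ [H|[H _]]]; lra]].
  destruct (Rlt_dec 0 (w T i)); [|split; [discriminate|intros [_ [H|[_ [H _]]]]; lra]].
  rewrite Nat.ltb_lt. split; [auto|]. intros [_ [H|[_ [_ H]]]]; [lra|auto].
Qed.

Lemma precedes_pos j i : precedes T S j i = true -> 0 < w T j.
Proof. rewrite precedes_spec. tauto. Qed.

Lemma precedes_irrefl i : precedes T S i i = false.
Proof.
  destruct (precedes T S i i) eqn:E; auto. apply precedes_spec in E.
  destruct E as [_ [H|[_ [_ H]]]]; [lra|lia].
Qed.

Lemma precedes_trans k j i :
  precedes T S k j = true -> precedes T S j i = true -> precedes T S k i = true.
Proof.
  rewrite !precedes_spec. intros [Hk H1] [Hj H2]. split; auto.
  destruct H1 as [H1|[H1 [_ H1']]]; destruct H2 as [H2|[H2 [H2' H2'']]];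
    try (left; lra).
  right. split; [lra|]. split; auto. lia.
Qed.

Lemma precedes_total i j : 0 < w T i -> 0 < w T j -> i <> j ->
  precedes T S i j = true \/ precedes T S j i = true.
Proof.
  intros Hi Hj Hne. rewrite !precedes_spec.
  destruct (Rtotal_order (sigma S i) (sigma S j)) as [H|[H|H]]; auto.
  destruct (proj1 (Nat.lt_gt_cases i j) Hne) as [h|h];
    [left|right]; split; auto; right; repeat split; auto; lra.
Qed.

Lemma seq_start_nonneg i : 0 <= seq_start T S i.
Proof.
  apply sumR_map_nonneg. intros j Hj. apply in_nodes in Hj.
  destruct (precedes T S j i); [apply w_nonneg|lra]; auto.
Qed.

Lemma seq_start_mono a b :
  (forall k, (k < nn T)%nat -> precedes T S k a = true -> precedes T S k b = true) ->
  seq_start T S a <= seq_start T S b.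
Proof.
  intros H. apply sumR_map_le. intros k Hk. apply in_nodes in Hk.
  destruct (precedes T S k a) eqn:E1; [rewrite H by auto; lra|].
  destruct (precedes T S k b); [apply w_nonneg|lra]; auto.
Qed.

Lemma seq_start_precedes a b : (a < nn T)%nat -> precedes T S a b = true ->
  seq_start T S a + w T a <= seq_start T S b.
Proof.
  intros Ha Hab. unfold seq_start.
  rewrite <- (sumR_map_indicator a (w T a) (nodes T)) by (apply in_nodes || apply seq_NoDup; auto).
  rewrite <- sumR_map_plus. apply sumR_map_le. intros k Hk.
  destruct (Nat.eq_dec k a) as [->|hne]; [rewrite precedes_irrefl, Hab; lra|].
  destruct (precedes T S k a) eqn:E1; [rewrite (precedes_trans k a b E1 Hab); lra|].
  apply in_nodes in Hk. assert (0 <= w T k) by (apply w_nonneg; auto).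
  destruct (precedes T S k b); lra.
Qed.

Lemma seq_start_le_end c a : (a < nn T)%nat ->
  (forall k, (k < nn T)%nat -> precedes T S k c = true ->
     precedes T S k a = true \/ k = a) ->
  seq_start T S c <= seq_start T S a + w T a.
Proof.
  intros Ha H. unfold seq_start.
  rewrite <- (sumR_map_indicator a (w T a) (nodes T)) by (apply in_nodes || apply seq_NoDup; auto).
  rewrite <- sumR_map_plus. apply sumR_map_le. intros k Hk. apply in_nodes in Hk.
  assert (0 <= w T k) by (apply w_nonneg; auto).
  destruct (precedes T S k c) eqn:E1.
  - destruct (H k Hk E1) as [Hka| ->]; [rewrite Hka; destruct Nat.eq_dec; subst; lra|].
    rewrite precedes_irrefl. destruct Nat.eq_dec; [lra|congruence].
  - destruct (precedes T S k a); destruct Nat.eq_dec; subst; lra.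
Qed.

Lemma precedes_of_seq_start_le j i : (i < nn T)%nat -> (j < nn T)%nat ->
  0 < w T i -> 0 < w T j -> seq_start T S j <= seq_start T S i ->
  j = i \/ precedes T S j i = true.
Proof.
  intros Hi Hj Hwi Hwj Hle. destruct (Nat.eq_dec j i); auto.
  destruct (precedes_total j i Hwj Hwi n) as [h|h]; auto.
  assert (H := seq_start_precedes i j Hi h). lra.
Qed.

Lemma seq_end_le_of_end_le q i : (q < nn T)%nat ->
  sigma S q + w T q <= sigma S i -> seq_start T S q + w T q <= seq_start T S i.
Proof.
  intros Hq H. destruct (Rlt_dec 0 (w T q)) as [hp|hz].
  - apply seq_start_precedes; auto. apply precedes_spec. split; auto. left; lra.
  - assert (w T q = 0) by (assert (0 <= w T q) by (apply w_nonneg; auto); lra).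
    rewrite H0, Rplus_0_r. apply seq_start_mono. intros k _ Hk.
    apply precedes_spec in Hk. apply precedes_spec.
    destruct Hk as [Hk [Hk2|[_ [Hk2 _]]]]; [|lra]. split; auto. left; lra.
Qed.

Lemma start_le_of_seq_start_lt k i : (i < nn T)%nat -> 0 < w T i ->
  seq_start T S k < seq_start T S i + w T i -> sigma S k <= sigma S i.
Proof.
  intros Hi Hwi H. destruct (Rle_dec (sigma S k) (sigma S i)) as [h|h]; auto.
  assert (Hp : precedes T S i k = true) by (apply precedes_spec; split; auto; left; lra).
  assert (X := seq_start_precedes i k Hi Hp). lra.
Qed.

Lemma seq_running_unique i j t : (i < nn T)%nat -> (j < nn T)%nat ->
  running T (sequentialize T S) i t -> running T (sequentialize T S) j t -> i = j.
Proof.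
  intros Hi Hj Ri Rj. unfold running in *; simpl in *.
  destruct (Nat.eq_dec i j) as [|hne]; auto. exfalso.
  assert (0 < w T i) by lra. assert (0 < w T j) by lra.
  destruct (precedes_total i j H H0 hne) as [h|h].
  - assert (X := seq_start_precedes i j Hi h). lra.
  - assert (X := seq_start_precedes j i Hj h). lra.
Qed.

Lemma sequentialize_valid p : (1 <= p)%nat -> valid T p S -> valid T p (sequentialize T S).
Proof.
  intros Hp [_ [_ Hv3]]. repeat split.
  - simpl; lia.
  - apply seq_start_nonneg.
  - intros i j t Hi Hj Hne _ [Ri Rj]. apply Hne, (seq_running_unique i j t); auto.
  - intros i j Hi [Hj Hpar]. apply seq_end_le_of_end_le; auto.
    apply Hv3; [exact Hi|split; auto].
Qed.

Lemma seq_start_first : (exists j, (j < nn T)%nat /\ 0 < w T j) ->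
  exists m, (m < nn T)%nat /\ 0 < w T m /\ seq_start T S m = 0.
Proof.
  intros Hpos.
  destruct (list_argmin (nodes T) (fun j => 0 < w T j) (seq_start T S)) as [m [Hm [Hmp Hmin]]].
  { destruct Hpos as [j Hj]. exists j. rewrite in_nodes. auto. }
  apply in_nodes in Hm. exists m. repeat split; auto.
  apply sumR_map_eq0. intros j Hj. destruct (precedes T S j m) eqn:E; auto. exfalso.
  apply in_nodes in Hj. assert (Hjp := precedes_pos j m E).
  assert (X := seq_start_precedes j m Hj E). specialize (Hmin j (proj2 (in_nodes T j) Hj) Hjp).
  lra.
Qed.

Lemma seq_start_next i : (i < nn T)%nat -> 0 < w T i ->
  (exists k, (k < nn T)%nat /\ 0 < w T k /\ seq_start T S i < seq_start T S k) ->
  exists k, (k < nn T)%nat /\ 0 < w T k /\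
    seq_start T S i < seq_start T S k <= seq_start T S i + w T i.
Proof.
  intros Hi Hwi Ex.
  destruct (list_argmin (nodes T) (fun k => 0 < w T k /\ seq_start T S i < seq_start T S k)
              (seq_start T S)) as [k [Hk [[Hkp Hkg] Hmin]]].
  { destruct Ex as [k Hk]. exists k. rewrite in_nodes. tauto. }
  apply in_nodes in Hk. exists k. repeat split; auto.
  apply seq_start_le_end; auto. intros j Hj Hjk.
  assert (Hjp := precedes_pos j k Hjk). assert (X := seq_start_precedes j k Hj Hjk).
  destruct (precedes_of_seq_start_le j i Hi Hj Hwi Hjp); auto.
  destruct (Rle_dec (seq_start T S j) (seq_start T S i)) as [h|h]; auto.
  specialize (Hmin j (proj2 (in_nodes T j) Hj) (conj Hjp (Rnot_le_lt _ _ h))). lra.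
Qed.

Lemma seq_end_le_last i : (i < nn T)%nat -> 0 < w T i ->
  (forall k, (k < nn T)%nat -> 0 < w T k -> seq_start T S k <= seq_start T S i) ->
  forall k, (k < nn T)%nat -> seq_start T S k + w T k <= seq_start T S i + w T i.
Proof.
  intros Hi Hwi Hlast k Hk.
  assert (Hall : forall k, (k < nn T)%nat -> 0 < w T k -> k = i \/ precedes T S k i = true)
    by (intros; apply precedes_of_seq_start_le; auto).
  destruct (Rlt_dec 0 (w T k)) as [h|h].
  - destruct (Hall k Hk h) as [->|h2]; [lra|].
    assert (X := seq_start_precedes k i Hk h2). lra.
  - assert (w T k = 0) by (assert (0 <= w T k) by (apply w_nonneg; auto); lra).
    rewrite H, Rplus_0_r. apply seq_start_le_end; auto. intros j Hj Hjk.
    destruct (Hall j Hj (precedes_pos _ _ Hjk)) as [->|h2]; auto.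
Qed.

(* The positive tasks fill [[0, makespan)] without gaps: the task of largest
   start time not exceeding [t] is still running at [t]. *)
Lemma sequentialize_no_idle : no_idle T (sequentialize T S).
Proof.
  intros t Ht. simpl in *.
  assert (Hk0 : exists k0, (k0 < nn T)%nat /\ t < seq_start T S k0 + w T k0).
  { unfold makespan in Ht.
    destruct (fold_Rmax_attained (map (fun i => seq_start T S i + w T i) (nodes T))) as [E|E];
      [simpl in Ht; lra|].
    apply in_map_iff in E. destruct E as [k [Ek Hk]]. simpl in Ht. rewrite <- Ek in Ht.
    exists k. rewrite <- in_nodes. tauto. }
  destruct Hk0 as [k0 [Hk0 Ht0]].
  assert (Hpos : exists j, (j < nn T)%nat /\ 0 < w T j).
  { apply NNPP. intros HN.
    assert (seq_start T S k0 = 0).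
    { apply sumR_map_eq0. intros j Hj. destruct (precedes T S j k0) eqn:E; auto.
      exfalso; apply HN. exists j. rewrite <- in_nodes. split; auto. eapply precedes_pos; eauto. }
    assert (~ 0 < w T k0) by (intros h; apply HN; eauto).
    assert (0 <= w T k0) by (apply w_nonneg; auto). lra. }
  destruct (seq_start_first Hpos) as [m [Hm [Hmp Hm0]]].
  destruct (list_argmax (nodes T) (fun j => 0 < w T j /\ seq_start T S j <= t) (seq_start T S))
    as [i [Hi [[Hip Hit] Hmax]]].
  { exists m. rewrite in_nodes. repeat split; auto. lra. }
  apply in_nodes in Hi.
  destruct (Rlt_dec t (seq_start T S i + w T i)) as [hlt|hge].
  { exists i. split; auto. unfold running. simpl. lra. }
  exfalso.
  destruct (classic (exists k, (k < nn T)%nat /\ 0 < w T k /\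
                               seq_start T S i < seq_start T S k)) as [Ex|NEx].
  - destruct (seq_start_next i Hi Hip Ex) as [k [Hk [Hkp [Hk1 Hk2]]]].
    assert (Hkt : seq_start T S k <= t) by lra.
    specialize (Hmax k (proj2 (in_nodes T k) Hk) (conj Hkp Hkt)). lra.
  - assert (X := seq_end_le_last i Hi Hip).
    assert (seq_start T S k0 + w T k0 <= seq_start T S i + w T i); [|lra].
    apply X; auto. intros k Hk Hkp. apply Rnot_lt_le. intros h. apply NEx. eauto.
Qed.

Lemma seq_mem_le_mem_at_start p i t : valid T p S -> (i < nn T)%nat ->
  running T (sequentialize T S) i t ->
  mem T (sequentialize T S) t <= mem T S (sigma S i).
Proof.
  intros HS Hi Ri. assert (Ri' := Ri). unfold running in Ri; simpl in Ri.
  assert (Hip : 0 < w T i) by lra.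
  apply sumR_map_le. intros k Hk. apply in_nodes in Hk.
  destruct Hwf as [_ [_ [_ [_ Hw]]]]. destruct (Hw k Hk) as [_ [Hek Hok]].
  apply Rplus_le_compat; apply Rmult_le_compat_l; auto.
  - destruct (Rle_dec (seq_start T S k) t) as [a1|a1];
      [|rewrite ind_outside by (simpl; lra); apply ind_ge0].
    destruct (Rlt_dec t (out_end T (sequentialize T S) k)) as [a2|a2];
      [|rewrite ind_outside by lra; apply ind_ge0].
    rewrite (ind_inside (sigma S k)); [apply ind_le1|]. split.
    + apply start_le_of_seq_start_lt; auto. lra.
    + unfold out_end in *. destruct (par T k) as [q|] eqn:Hq.
      * assert (HqT := parent_in_tree T k q Hwf Hk Hq). simpl in a2.
        destruct (Rlt_dec (sigma S i) (sigma S q + w T q)) as [b|b]; auto.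
        assert (X := seq_end_le_of_end_le q i HqT ltac:(lra)). lra.
      * assert (sigma S i + w T i <= makespan T S) by (apply end_le_makespan; auto). lra.
  - destruct (Nat.eq_dec k i) as [->|hne].
    + rewrite (ind_inside (sigma S i)) by lra. apply ind_le1.
    + rewrite ind_outside; [apply ind_ge0|]. intros Rk.
      apply hne, (seq_running_unique k i t); auto.
Qed.

Lemma sequentialize_mem_le_peak p mS t : (1 <= p)%nat -> valid T p S -> is_peak T S mS ->
  mem T (sequentialize T S) t <= mS.
Proof.
  intros Hp HS [Hub _].
  assert (Hm0 : 0 <= mS) by (apply Rle_trans with (mem T S 0); [apply mem_nonneg|apply Hub]; eauto).
  destruct (classic (0 <= t < makespan T (sequentialize T S))) as [Ht|Ht].
  - destruct (sequentialize_no_idle t Ht) as [i [Hi Ri]].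
    apply Rle_trans with (mem T S (sigma S i)); [|apply Hub; eauto].
    apply (seq_mem_le_mem_at_start p); auto.
  - rewrite (mem_eq0_outside T p); auto.
    + apply sequentialize_valid; auto.
    + destruct (Rlt_dec t 0); [left|right]; lra.
Qed.

End Sequentialize.

Lemma min_peak_of_sequential_min T p mS : wf_tree T -> (1 <= p)%nat ->
  (forall S' mS', valid T p S' -> single_proc T S' -> no_idle T S' ->
     is_peak T S' mS' -> mS <= mS') ->
  forall S mS2, valid T p S -> is_peak T S mS2 -> mS <= mS2.
Proof.
  intros Hwf Hp Hmin S mS2 HS Hpk.
  destruct (completeness (fun x => exists t, x = mem T (sequentialize T S) t)) as [m Hm].
  - exists mS2. intros x [t ->]. apply (sequentialize_mem_le_peak T S Hwf p); auto.
  - exists (mem T (sequentialize T S) 0). eauto.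
  - assert (mS <= m).
    { apply (Hmin (sequentialize T S)); auto.
      + apply sequentialize_valid; auto.
      + exists 0%nat. reflexivity.
      + apply sequentialize_no_idle; auto. }
    assert (m <= mS2).
    { apply Hm. intros x [t ->]. apply (sequentialize_mem_le_peak T S Hwf p); auto. }
    lra.
Qed.

Definition star (p : nat) : tree :=
  mkTree (S p) 0 (fun i => match i with 0 => None | _ => Some 0%nat end)
    (fun i => match i with 0 => 0 | _ => 1 end)
    (fun i => match i with 0 => 0 | _ => 1 end) (fun _ => 0).

Definition star_parallel : schedule :=
  mkSched (fun i => match i with 0 => 0%nat | S k => k end)
          (fun i => match i with 0 => 1 | _ => 0 end).

Definition star_serial (p : nat) : schedule :=
  mkSched (fun _ => 0%nat) (fun i => match i with 0 => INR p | S k => INR k end).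

Lemma star_wf p : wf_tree (star p).
Proof.
  unfold wf_tree; simpl. repeat split.
  - lia.
  - intros i Hi Hr. destruct i; [congruence|]. exists 0%nat. split; auto; lia.
  - intros i Hi. destruct i; [exists 0%nat; reflexivity|]. exists 1%nat. reflexivity.
  - destruct i; lra.
  - destruct i; lra.
  - lra.
Qed.

Lemma mem_star p S t : mem (star p) S t = active_units (seq 1 p) (sigma S) t.
Proof.
  unfold mem, nodes, active_units. simpl nn. cbn [seq map]. rewrite sumR_cons.
  simpl out. simpl ex. simpl w. rewrite Rmult_0_l, Rmult_0_l, !Rplus_0_l.
  f_equal. apply map_ext_in. intros a Ha. apply in_seq in Ha. destruct a; [lia|]. ring.
Qed.

Lemma star_makespan_ge1 p S : (1 <= p)%nat -> valid (star p) p S -> 1 <= makespan (star p) S.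
Proof.
  intros Hp [Hv _]. destruct (Hv 1%nat ltac:(simpl; lia)) as [_ H0].
  assert (H := end_le_makespan (star p) S 1 ltac:(simpl; lia)). simpl in H. lra.
Qed.

Lemma star_min_makespan p : (1 <= p)%nat -> is_min_makespan (star p) p 1.
Proof.
  intros Hp. split; [|intros; apply star_makespan_ge1; auto].
  exists star_parallel. split.
  - repeat split.
    + destruct i; simpl in *; lia.
    + destruct i; simpl; lra.
    + intros i j t Hi Hj Hij Hpr [Ri Rj]. unfold running in *. simpl in *.
      destruct i; [lra|]. destruct j; [lra|]. lia.
    + intros i j Hi [Hj Hpar]. simpl in *. destruct j; [discriminate|].
      injection Hpar as <-. lra.
  - apply Rle_antisym.
    + apply fold_Rmax_lub; [lra|]. intros x Hx. apply in_map_iff in Hx.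
      destruct Hx as [i [<- _]]. destruct i; simpl; lra.
    + assert (H := end_le_makespan (star p) star_parallel 0 ltac:(simpl; lia)).
      simpl in H. lra.
Qed.

Lemma active_units_staircase (s : nat -> R) n t : (forall k, s (S k) = INR k) ->
  active_units (seq 1 n) s t = ind 0 (INR n) t.
Proof.
  intros Hs. unfold active_units. induction n as [|n IH].
  - unfold ind. destruct (Rle_dec 0 t); destruct (Rlt_dec t (INR 0)); simpl in *;
      unfold sumR; simpl; lra.
  - rewrite seq_S, map_app, sumR_app, IH. cbn [map]. rewrite sumR_cons.
    replace (1 + n)%nat with (S n) by lia. rewrite Hs, S_INR. unfold sumR; simpl fold_right.
    assert (0 <= INR n) by apply pos_INR.
    unfold ind. repeat destruct Rle_dec; repeat destruct Rlt_dec; lra.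
Qed.

Lemma mem_star_serial p t : mem (star p) (star_serial p) t = ind 0 (INR p) t.
Proof. rewrite mem_star. apply active_units_staircase. reflexivity. Qed.

Lemma star_min_peak p : (1 <= p)%nat -> is_min_peak (star p) p 1.
Proof.
  intros Hp. split.
  - exists (star_serial p), 1. split; [|split; [|reflexivity]].
    + repeat split.
      * simpl; lia.
      * destruct i; apply pos_INR.
      * intros i j t Hi Hj Hij _ [Ri Rj]. unfold running in *. simpl in *.
        destruct i; [lra|]. destruct j; [lra|].
        assert (i < S j)%nat by (apply INR_lt; rewrite S_INR; lra).
        assert (j < S i)%nat by (apply INR_lt; rewrite S_INR; lra). lia.
      * intros i j Hi [Hj Hpar]. simpl in *. destruct j; [discriminate|].
        injection Hpar as <-. apply le_INR in Hj. rewrite !S_INR in Hj. lra.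
    + split.
      * intros x [t ->]. rewrite mem_star_serial. apply ind_le1.
      * intros b Hb. apply Hb. exists 0. rewrite mem_star_serial, ind_inside; auto.
        split; [lra|]. apply lt_0_INR. lia.
  - intros S mS HS [Hub _].
    apply Rle_trans with (mem (star p) S (sigma S 1)); [|apply Hub; eauto].
    rewrite mem_star. rewrite <- (ind_inside (sigma S 1) (sigma S 1 + 1) (sigma S 1)) by lra.
    apply (elem_le_sumR_map (fun j => ind (sigma S j) (sigma S j + 1) (sigma S 1))).
    + intros; apply ind_ge0.
    + apply in_seq; lia.
Qed.

Lemma star_tradeoff p S mS : valid (star p) p S -> is_peak (star p) S mS ->
  INR p <= mS * makespan (star p) S.
Proof.
  intros [Hv _] [Hub _].
  assert (H0 : 0 <= mS).
  { apply Rle_trans with (mem (star p) S 0); [apply mem_nonneg, star_wf|apply Hub; eauto]. }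
  replace (INR p) with (INR (length (seq 1 p))) by (rewrite length_seq; auto).
  replace (makespan (star p) S) with (makespan (star p) S - 0) by ring.
  apply (count_le_load_mul_length _ (sigma S)); auto.
  - intros t. rewrite <- mem_star. apply Hub; eauto.
  - intros j Hj. apply in_seq in Hj. destruct (Hv j ltac:(simpl; lia)) as [_ H1].
    split; [auto|]. assert (H := end_le_makespan (star p) S j ltac:(simpl; lia)).
    destruct j; [lia|exact H].
  - apply makespan_ge0.
Qed.

Theorem lemma2 :
  (forall p : nat, (2 <= p)%nat ->
     exists T : tree, wf_tree T /\
       exists c m, is_min_makespan T p c /\ is_min_peak T p m /\
         forall S mS, valid T p S -> is_peak T S mS ->
           (makespan T S / c) * (mS / m) >= INR p)
  /\
  (forall (T : tree) (p : nat), wf_tree T -> (1 <= p)%nat ->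
     forall S mS, valid T p S -> single_proc T S -> no_idle T S ->
       is_peak T S mS ->
       (forall S' mS', valid T p S' -> single_proc T S' -> no_idle T S' ->
          is_peak T S' mS' -> mS <= mS') ->
       is_min_peak T p mS /\
       exists c, is_min_makespan T p c /\ makespan T S <= INR p * c).
Proof.
  split.
  - intros p Hp. exists (star p). split; [apply star_wf|]. exists 1, 1.
    split; [apply star_min_makespan; lia|]. split; [apply star_min_peak; lia|].
    intros S mS HS Hpk. assert (H := star_tradeoff p S mS HS Hpk).
    unfold Rdiv. rewrite Rinv_1, !Rmult_1_r. lra.
  - intros T p Hwf Hp S mS HS _ Hni Hpk Hmin. split.
    + split; [exists S, mS; auto|]. apply (min_peak_of_sequential_min T p); auto.
    + destruct (exists_min_makespan T p S Hwf HS) as [c Hc]. exists c. split; auto.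
      destruct Hc as [[So [HSo <-]] _].
      apply Rle_trans with (sumR (map (w T) (nodes T))).
      * apply makespan_le_work_of_no_idle; auto.
      * apply work_le_p_makespan; auto.
Qed.
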